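(* Let $n\ge7$ and $\mathcal{A}\in\hat{\mathcal{T}}_n$. Then the automorphisms of $\mathcal{A}$ are exactly the linear maps $\varphi$ with $\varphi(e_1)=e_1+\alpha e_n$, $\varphi(e_2)=e_2+\beta e_n$, $\varphi(e_i)=e_i$ for $3\le i\le n$, where $\alpha,\beta\in\mathbb{C}$.
   Context: Over $\mathbb{C}$, basis $e_1,\dots,e_n$, $e_ie_j=\sum_kc_{ij}^ke_k$. For $n\ge3$, $\mathcal{T}'_n$ is the family of anticommutative algebra structures with $c_{ij}^k=0$ whenever $k\le\max\{i,j\}$ and $e_ie_{i+1}=e_{i+2}$ for $1\le i\le n-2$, other constants arbitrary subject to anticommutativity. For $n\ge7$, $\hat{\mathcal{T}}_n$ is the subfamily of $\mathcal{T}'_n$ with $c_{13}^4=c_{14}^5=c_{15}^6=c_{24}^5=c_{25}^6=c_{14}^6=c_{24}^6=c_{13}^6=0$, $c_{35}^6=1$ and $c_{13}^5c_{46}^7\ne0$. *)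

From HB Require Import structures.
From mathcomp Require Import all_boot all_order all_algebra.
From mathcomp Require Import complex reals.
Set Implicit Arguments. Unset Strict Implicit. Unset Printing Implicit Defensive.
Import Order.TTheory GRing.Theory Num.Theory.
Local Open Scope ring_scope.

(* Structure constants are 1-based: c i j k = c_{ij}^k for 1 <= i,j,k <= n;
   values outside that range are irrelevant. *)
Section Alg.
Variable F : fieldType.

(* vectors of F^n are row vectors 'rV_n; e_i (1-based) is the row delta_mx 0 (i-1) *)
Definition basis_vec (n i : nat) : 'rV[F]_n :=
  \row_(k < n) (if k.+1 == i then 1 else 0).

Definition alg_mul (n : nat) (c : nat -> nat -> nat -> F) (x y : 'rV[F]_n)
  : 'rV[F]_n :=
  \row_(k < n) \sum_(i < n) \sum_(j < n) x 0 i * y 0 j * c i.+1 j.+1 k.+1.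

(* automorphism: bijective linear map phi (u |-> u *m A) preserving product *)
Definition is_automorphism (n : nat) (c : nat -> nat -> nat -> F)
  (A : 'M[F]_n) : Prop :=
  A \in unitmx /\
  forall x y : 'rV[F]_n, alg_mul c (x *m A) (y *m A) = alg_mul c x y *m A.

Definition in_Tprime (n : nat) (c : nat -> nat -> nat -> F) : Prop :=
  [/\ (forall i j k, (1 <= i <= n)%N -> (1 <= j <= n)%N -> (1 <= k <= n)%N ->
         c i j k = - c j i k),
      (forall i j k, (1 <= i <= n)%N -> (1 <= j <= n)%N -> (1 <= k <= n)%N ->
         (k <= maxn i j)%N -> c i j k = 0)
    & (forall i k, (1 <= i <= n - 2)%N -> (1 <= k <= n)%N ->
         c i i.+1 k = if k == i.+2 then 1 else 0)].

Definition in_That (n : nat) (c : nat -> nat -> nat -> F) : Prop :=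
  [/\ in_Tprime n c,
      c 1%N 3%N 4%N = 0 /\ c 1%N 4%N 5%N = 0 /\ c 1%N 5%N 6%N = 0 /\
      c 2%N 4%N 5%N = 0 /\ c 2%N 5%N 6%N = 0 /\ c 1%N 4%N 6%N = 0 /\
      c 2%N 4%N 6%N = 0 /\ c 1%N 3%N 6%N = 0,
      c 3%N 5%N 6%N = 1
    & c 1%N 3%N 5%N * c 4%N 6%N 7%N != 0].

(* the matrix of phi: phi(e_1) = e_1 + a e_n, phi(e_2) = e_2 + b e_n,
   phi(e_i) = e_i otherwise; row i of the matrix is phi(e_{i+1}) *)
Definition special_aut (n : nat) (a b : F) : 'M[F]_n :=
  \matrix_(i < n, j < n)
    ((if i == j :> nat then 1 else 0) +
     (if j.+1 == n then (if i == 0 :> nat then a else if i == 1 :> nat then b else 0)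
      else 0)).
End Alg.

From HB Require Import structures.
From mathcomp Require Import all_boot all_order all_algebra.
From mathcomp Require Import complex reals.
From mathcomp Require Import zify ring.
Set Implicit Arguments. Unset Strict Implicit. Unset Printing Implicit Defensive.
Import Order.TTheory GRing.Theory Num.Theory.
Local Open Scope ring_scope.

(* Write phi_k(p) for the p-th coordinate of phi(e_k).  In T'_n a product
   only involves constants c_{st}^p with p > max(s,t), and
   e_{k+2} = e_k e_{k+1}; so phi is lower triangular from e_3 on, with
   phi_{k+2}(k+2) = phi_k(k) phi_{k+1}(k+1), and invertibility makes these
   diagonal entries nonzero.  Comparing low coordinates of
   phi(e_i) phi(e_j) = phi(e_i e_j) for a few pairs (i,j), using the
   constants of hat T_n, gives phi(e_1) = e_1 and phi(e_2) = e_2 up to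
   coordinate 4; an induction on the coordinate, propagated along the
   recurrence, extends this up to coordinate n - 1.  Conversely
   e_1 |-> e_1 + a e_n, e_2 |-> e_2 + b e_n preserves products, which have
   no e_1, e_2 component and ignore the e_n components of the factors.

   We work over any numFieldType (characteristic 0 gives c_{ii}^k = 0). *)

Section Coordinates.
Variables (K : numFieldType) (n : nat) (c : nat -> nat -> nat -> K).

(* The k-th coordinate (1-based) of a vector; zero when k = 0 or k > n. *)
Definition vcoord (x : 'rV[K]_n) (k : nat) : K :=
  \sum_(j < n) (if j.+1 == k then x 0 j else 0).

Definition kdelta (i p : nat) : K := if p == i then 1 else 0.

(* The p-th coordinate of the product of the vectors with coordinate
   functions f and g, summing only over indices below p (in T'_n the other
   constants c_{st}^p vanish). *)
Definition prodc (f g : nat -> K) (p : nat) : K :=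
  \sum_(s < p) \sum_(t < p) f s * g t * c s t p.

Definition vanish_below (f : nat -> K) (m : nat) : Prop :=
  forall s, (s < m)%N -> f s = 0.

Lemma sum_if_eq (p k : nat) (F : nat -> K) :
  \sum_(i < p) (if (i : nat) == k then F i else 0) = if (k < p)%N then F k else 0.
Proof. by rewrite -big_mkcond big_ord1_eq. Qed.

Lemma sum_ord_trunc (F : nat -> K) q m : (q <= m)%N ->
  (forall i, (q <= i)%N -> (i < m)%N -> F i = 0) ->
  \sum_(i < m) F i = \sum_(i < q) F i.
Proof.
move=> hqm h; rewrite -!(big_mkord xpredT) (@big_cat_nat _ _ _ q 0 m _ _ (leq0n q) hqm) /=.
rewrite [X in _ + X]big_nat_cond [X in _ + X]big1 ?addr0 // => i.
by case/andP=> /andP[h1 h2] _; apply: h.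
Qed.

Lemma sum_ord_shift (F : nat -> K) q : F 0%N = 0 ->
  \sum_(i < q.+1) F i = \sum_(i < q) F i.+1.
Proof. by move=> h; rewrite big_ord_recl h add0r. Qed.

Lemma vcoord_ord x (j : 'I_n) : vcoord x j.+1 = x 0 j.
Proof.
rewrite /vcoord (bigD1 j) //= eqxx big1 ?addr0 // => k ne.
by rewrite eqSS; case: eqP => // e; move: ne; rewrite -val_eqE /= e eqxx.
Qed.

Lemma vcoord0 x : vcoord x 0 = 0.
Proof. by apply: big1 => j _. Qed.

Lemma vcoord_gt x k : (n < k)%N -> vcoord x k = 0.
Proof. by move=> h; apply: big1 => j _; case: eqP => // e; have := ltn_ord j; lia. Qed.

Lemma vcoord_zero p : vcoord 0 p = 0.
Proof. by apply: big1 => j _; rewrite mxE if_same. Qed.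

Lemma vcoord_inj x y : (forall k, (1 <= k <= n)%N -> vcoord x k = vcoord y k) -> x = y.
Proof. by move=> h; apply/rowP => j; rewrite -!vcoord_ord h //= ltn_ord. Qed.

Lemma vcoord_basis i p : (1 <= i <= n)%N -> vcoord (basis_vec K n i) p = kdelta i p.
Proof.
move=> hi; case: p => [|p]; first by rewrite vcoord0 /kdelta; case: i hi.
rewrite /vcoord /kdelta; under eq_bigr do rewrite mxE eqSS.
rewrite (sum_if_eq _ _ (fun j => if j.+1 == i then 1 else 0)).
by case: ltnP => // hp; case: eqP => // e; move: hi hp; rewrite -e; lia.
Qed.

Lemma kdelta_vanish i : vanish_below (kdelta i) i.
Proof. by move=> s hs; rewrite /kdelta; case: eqP => // e; move: hs; rewrite e ltnn. Qed.

Lemma vanish_below_le (f : nat -> K) a b : vanish_below f a -> (b <= a)%N ->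
  vanish_below f b.
Proof. by move=> h hb s hs; apply: h; lia. Qed.

Lemma prodc_ext f g f' g' p :
  (forall s, (s < p)%N -> f s = f' s) -> (forall t, (t < p)%N -> g t = g' t) ->
  prodc f g p = prodc f' g' p.
Proof.
by move=> hf hg; apply: eq_bigr => s _; apply: eq_bigr => t _; rewrite hf ?hg.
Qed.

Lemma prodc_vanish f g i j p : vanish_below f i -> vanish_below g j ->
  (p <= maxn i j)%N -> prodc f g p = 0.
Proof.
move=> hf hg hp; apply: big1 => s _; apply: big1 => t _.
case: (ltnP s i) => hs; first by rewrite hf // !mul0r.
case: (ltnP t j) => ht; first by rewrite hg // mulr0 mul0r.
by have := ltn_ord s; have := ltn_ord t; lia.
Qed.

Lemma prodc_kdelta i j p :
  prodc (kdelta i) (kdelta j) p = if (i < p)%N && (j < p)%N then c i j p else 0.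
Proof.
rewrite /prodc; transitivity
  (\sum_(s < p) (if (s : nat) == i then (if (j < p)%N then c i j p else 0) else 0)).
  apply: eq_bigr => s _; transitivity
    (\sum_(t < p) (if (t : nat) == j then kdelta i s * c s j p else 0)).
    apply: eq_bigr => t _; rewrite [kdelta j t]/kdelta.
    by case: eqP => [->|]; rewrite ?mulr1 // mulr0 mul0r.
  rewrite (sum_if_eq _ _ (fun _ => kdelta i s * c s j p)) /kdelta.
  by case: eqP => [->|]; rewrite ?mul1r // !mul0r if_same.
by rewrite (sum_if_eq _ _ (fun _ => if (j < p)%N then c i j p else 0)); case: (i < p)%N.
Qed.

Lemma prodc_split f g f0 g0 f' g' p :
  (forall s, f s = f0 s + f' s) -> (forall t, g t = g0 t + g' t) ->
  prodc f g p = prodc f0 g0 p + prodc f0 g' p + prodc f' g0 p + prodc f' g' p.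
Proof.
move=> hf hg; rewrite /prodc -!big_split; apply: eq_bigr => s _.
by rewrite -!big_split; apply: eq_bigr => t _; rewrite hf hg /=; ring.
Qed.

End Coordinates.

Arguments kdelta {K}.

Section SpecialAut.
Variables (K : numFieldType) (n : nat).
Hypothesis n_ge3 : (3 <= n)%N.

Lemma vcoord_special (z : 'rV[K]_n) a b p : (1 <= p <= n)%N ->
  vcoord (z *m special_aut n a b) p =
  vcoord z p + (if p == n then a * vcoord z 1 + b * vcoord z 2 else 0).
Proof.
case: p => [|r] //= hr; have hrn : (r < n)%N by lia.
rewrite !(vcoord_ord _ (Ordinal hrn)) mxE.
under eq_bigr => i _ do rewrite mxE /= mulrDr -(vcoord_ord z i).
rewrite big_split /=; congr (_ + _).
  transitivity (\sum_(i < n) (if (i : nat) == r then vcoord z r.+1 else 0)).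
    by apply: eq_bigr => i _; case: eqP => [->|]; rewrite ?mulr1 ?mulr0.
  by rewrite (sum_if_eq _ _ (fun _ => vcoord z r.+1)) hrn (vcoord_ord z (Ordinal hrn)).
case: (r.+1 == n); last by apply: big1 => i _; rewrite mulr0.
transitivity (\sum_(i < n) ((if (i : nat) == 0%N then a * vcoord z 1 else 0) +
                            (if (i : nat) == 1%N then b * vcoord z 2 else 0))).
  apply: eq_bigr => i _; case: eqP => [->|_]; first by rewrite mulrC addr0.
  by case: eqP => [->|_]; [rewrite mulrC add0r | rewrite mulr0 addr0].
have [n_gt0 n_gt1] : (0 < n)%N /\ (1 < n)%N by lia.
rewrite big_split /= (sum_if_eq _ _ (fun _ => a * vcoord z 1)).
by rewrite (sum_if_eq _ _ (fun _ => b * vcoord z 2)) n_gt0 n_gt1.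
Qed.

Lemma special_aut_unit (a b : K) : special_aut n a b \in unitmx.
Proof.
have h : special_aut n a b *m special_aut n (-a) (-b) = 1%:M.
  apply/row_matrixP => i; rewrite row_mul rowE [row i 1%:M]rowE mulmx1 -mulmxA.
  apply: vcoord_inj => p hp; rewrite mulmxA !vcoord_special; try lia.
  rewrite (_ : (1 == n) = false); last lia.
  rewrite (_ : (2 == n) = false); last lia.
  by case: (p == n); rewrite !addr0 //; ring.
by case: (mulmx1_unit h).
Qed.

End SpecialAut.

Section Tprime.
Variables (K : numFieldType) (n : nat) (c : nat -> nat -> nat -> K).

Hypothesis c_anti : forall i j k, (1 <= i <= n)%N -> (1 <= j <= n)%N ->
  (1 <= k <= n)%N -> c i j k = - c j i k.
Hypothesis c_upper : forall i j k, (1 <= i <= n)%N -> (1 <= j <= n)%N ->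
  (1 <= k <= n)%N -> (k <= maxn i j)%N -> c i j k = 0.
Hypothesis c_consec : forall i k, (1 <= i <= n - 2)%N -> (1 <= k <= n)%N ->
  c i i.+1 k = if k == i.+2 then 1 else 0.

(* Anticommutativity in characteristic 0 gives e_i e_i = 0. *)
Lemma c_diag i k : (1 <= i <= n)%N -> (1 <= k <= n)%N -> c i i k = 0.
Proof. by move=> hi hk; apply/eqP; rewrite -eqNr {2}(c_anti hi hi hk). Qed.

Lemma vcoord_mul (x y : 'rV[K]_n) p : (1 <= p <= n)%N ->
  vcoord (alg_mul c x y) p = prodc c (vcoord x) (vcoord y) p.
Proof.
case: p => [|q] //= hq; have hqn : (q < n)%N by lia.
rewrite (vcoord_ord _ (Ordinal hqn)) mxE /prodc.
under eq_bigr => i _ do under eq_bigr => j _ do rewrite -(vcoord_ord x i) -(vcoord_ord y j).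
rewrite (@sum_ord_shift _
  (fun s => \sum_(t < q.+1) vcoord x s * vcoord y t * c s t q.+1)); last first.
  by apply: big1 => t _; rewrite vcoord0 !mul0r.
under [RHS]eq_bigr => i _ do rewrite (@sum_ord_shift _
  (fun t => vcoord x i.+1 * vcoord y t * c i.+1 t q.+1)) ?vcoord0 ?mulr0 ?mul0r //.
(* On the left, c_{st}^{q+1} = 0 as soon as s > q or t > q. *)
rewrite (@sum_ord_trunc _
  (fun i => \sum_(j < n) vcoord x i.+1 * vcoord y j.+1 * c i.+1 j.+1 q.+1) q n).
  - apply: eq_bigr => i _; rewrite (@sum_ord_trunc _
      (fun j => vcoord x i.+1 * vcoord y j.+1 * c i.+1 j.+1 q.+1) q n); [by []|lia|].
    by move=> j h1 h2; rewrite c_upper ?mulr0 //; have := ltn_ord i; lia.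
  - lia.
  - move=> i h1 h2; apply: big1 => j _.
    by rewrite c_upper ?mulr0 //; have := ltn_ord j; lia.
Qed.

Lemma prodc_top f g j : (1 <= j)%N -> (j < n)%N -> vanish_below g j ->
  prodc c f g j.+1 = \sum_(s < j) f s * g j * c s j j.+1.
Proof.
move=> h1 h2 hg.
have inner s : \sum_(t < j.+1) f s * g t * c s t j.+1 = f s * g j * c s j j.+1.
  by rewrite big_ord_recr /= big1 ?add0r // => t _; rewrite hg ?mulr0 ?mul0r.
rewrite /prodc; under eq_bigr do rewrite inner.
by rewrite big_ord_recr /= c_diag ?mulr0 ?addr0 //; lia.
Qed.

Lemma prodc_consec i p : (1 <= i)%N -> (i.+2 <= n)%N -> (1 <= p <= n)%N ->
  prodc c (kdelta i) (kdelta i.+1) p = kdelta i.+2 p.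
Proof.
move=> h1 h2 hp; rewrite prodc_kdelta /kdelta; case: ifP => h.
  by rewrite c_consec //; lia.
by case: eqP => // e; move: h; rewrite e; lia.
Qed.

Lemma mul_consec i : (1 <= i)%N -> (i.+2 <= n)%N ->
  alg_mul c (basis_vec K n i) (basis_vec K n i.+1) = basis_vec K n i.+2.
Proof.
move=> h1 h2; apply: vcoord_inj => p hp; rewrite vcoord_mul // vcoord_basis; last lia.
by rewrite -prodc_consec //; apply: prodc_ext => s _; rewrite vcoord_basis //; lia.
Qed.

Lemma prodc_low f g p : f 0%N = 0 -> g 0%N = 0 -> (p <= 2)%N -> (2 <= n)%N ->
  prodc c f g p = 0.
Proof.
move=> f0 g0 hp hn; case: p hp => [|[|[|p]]] // _; rewrite /prodc.
- by rewrite big_ord0.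
- by rewrite !big_ord_recr !big_ord0 /= f0 !mul0r !add0r.
- rewrite !big_ord_recr !big_ord0 /= f0 g0 (@c_diag 1 2); try lia.
  by rewrite ?(mul0r, mulr0, add0r).
Qed.

Section Automorphism.
Variable A : 'M[K]_n.
Hypothesis A_mul : forall x y : 'rV[K]_n,
  alg_mul c (x *m A) (y *m A) = alg_mul c x y *m A.

Definition phi (k : nat) : nat -> K := vcoord (basis_vec K n k *m A).

Lemma phi0 k : phi k 0 = 0.
Proof. exact: vcoord0. Qed.

Lemma phi_gt k p : (n < p)%N -> phi k p = 0.
Proof. exact: vcoord_gt. Qed.

Lemma basis_mulmx (i : 'I_n) : basis_vec K n i.+1 *m A = row i A.
Proof.
rewrite rowE; congr (_ *m A); apply/rowP => j; rewrite !mxE eqSS /=.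
by rewrite -val_eqE /=; case: (j == i :> nat).
Qed.

Lemma vcoord_mulmx v p : (1 <= p <= n)%N ->
  vcoord (v *m A) p = \sum_(q < n) vcoord v q.+1 * phi q.+1 p.
Proof.
case: p => [|r] //= hr; have hrn : (r < n)%N by lia.
rewrite (vcoord_ord _ (Ordinal hrn)) mxE; apply: eq_bigr => q _.
by rewrite vcoord_ord /phi basis_mulmx (vcoord_ord _ (Ordinal hrn)) !mxE.
Qed.

Lemma phi_mul i j p : (1 <= i <= n)%N -> (1 <= j <= n)%N -> (1 <= p <= n)%N ->
  prodc c (phi i) (phi j) p =
  \sum_(q < n) (if (i < q.+1)%N && (j < q.+1)%N then c i j q.+1 else 0) * phi q.+1 p.
Proof.
move=> hi hj hp; rewrite /phi -vcoord_mul // A_mul vcoord_mulmx //.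
apply: eq_bigr => q _; rewrite vcoord_mul //; last by have := ltn_ord q; lia.
by rewrite (@prodc_ext _ c _ _ (kdelta i) (kdelta j)) ?prodc_kdelta // => s _;
  apply: vcoord_basis.
Qed.

Lemma phi_rec k p : (1 <= k)%N -> (k.+2 <= n)%N -> (1 <= p <= n)%N ->
  phi k.+2 p = prodc c (phi k) (phi k.+1) p.
Proof. by move=> h1 h2 hp; rewrite /phi -vcoord_mul // A_mul mul_consec. Qed.

Lemma phi_lower k : (3 <= k)%N -> (k <= n)%N -> vanish_below (phi k) k.
Proof.
case: k => [|[|k]] //; elim: k => // k IH _ hk s hs.
case: s hs => [|s] hs; first exact: phi0.
rewrite phi_rec //; last lia.
case: k IH hk hs => [|k] IH hk hs.
  by apply: prodc_low; [exact: phi0 | exact: phi0 | lia | lia].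
by apply: (@prodc_vanish _ c _ _ 0 k.+3) => //; apply: IH => //; lia.
Qed.

(* The sum of phi_mul stops at p, as phi(e_q) vanishes below q for q >= 3. *)
Lemma phi_mul_trunc i j p : (1 <= i <= n)%N -> (1 <= j <= n)%N ->
  (2 <= maxn i j)%N -> (1 <= p <= n)%N ->
  prodc c (phi i) (phi j) p =
  \sum_(q < p) (if (i < q.+1)%N && (j < q.+1)%N then c i j q.+1 else 0) * phi q.+1 p.
Proof.
move=> hi hj hm hp; rewrite phi_mul // (@sum_ord_trunc _ (fun q =>
  (if (i < q.+1)%N && (j < q.+1)%N then c i j q.+1 else 0) * phi q.+1 p) p n);
  [by [] | lia |].
move=> q h1 h2; case: (ltnP q 2) => hq.
  by case: ifP => h; [lia | rewrite mul0r].
by rewrite phi_lower ?mulr0 //; lia.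
Qed.

Lemma diag_rec k : (3 <= k)%N -> (k.+2 <= n)%N ->
  phi k.+2 k.+2 = phi k k * phi k.+1 k.+1.
Proof.
move=> h1 h2; rewrite phi_rec; [|lia..].
rewrite prodc_top; [|lia|lia|apply: phi_lower; lia].
rewrite big_ord_recr /= big1 ?add0r; first by rewrite c_consec ?eqxx ?mulr1 //; lia.
by move=> s _; rewrite phi_lower ?mul0r //; lia.
Qed.

(* The first step of the recurrence still involves the off-diagonal entries. *)
Lemma diag3 : (3 <= n)%N -> phi 3 3 = phi 1 1 * phi 2 2 - phi 1 2 * phi 2 1.
Proof.
move=> h3; rewrite (@phi_rec 1 3) //.
rewrite /prodc !big_ord_recr !big_ord0 /= !phi0.
rewrite (@c_diag 1 3) ?(@c_diag 2 3) ?(c_anti (i:=2) (j:=1)); try lia.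
by rewrite (@c_consec 1 3) /=; [ring | lia..].
Qed.

Section HatT.
Hypothesis n_ge7 : (7 <= n)%N.
Hypothesis A_unit : A \in unitmx.
Hypotheses (c134 : c 1 3 4 = 0) (c145 : c 1 4 5 = 0) (c156 : c 1 5 6 = 0)
  (c245 : c 2 4 5 = 0) (c256 : c 2 5 6 = 0) (c146 : c 1 4 6 = 0)
  (c136 : c 1 3 6 = 0) (c356 : c 3 5 6 = 1).
Hypotheses (c135_neq0 : c 1 3 5 != 0) (c467_neq0 : c 4 6 7 != 0).

(* Among the first seven indices the side conditions of the facts above hold
   by computation; these instances let the explicit computations below
   discharge them with isT. *)
Lemma c_consec7 i k : (1 <= i <= 5)%N -> (1 <= k <= 7)%N ->
  c i i.+1 k = if k == i.+2 then 1 else 0.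
Proof. by move=> hi hk; apply: c_consec; lia. Qed.

Lemma c_anti7 i j k : (1 <= i <= 7)%N -> (1 <= j <= 7)%N -> (1 <= k <= 7)%N ->
  c i j k = - c j i k.
Proof. by move=> hi hj hk; apply: c_anti; lia. Qed.

Lemma c_diag7 i k : (1 <= i <= 7)%N -> (1 <= k <= 7)%N -> c i i k = 0.
Proof. by move=> hi hk; apply: c_diag; lia. Qed.

Lemma phi_mul7 i j p : (1 <= i <= 7)%N -> (1 <= j <= 7)%N ->
  (2 <= maxn i j)%N -> (1 <= p <= 7)%N ->
  prodc c (phi i) (phi j) p =
  \sum_(q < p) (if (i < q.+1)%N && (j < q.+1)%N then c i j q.+1 else 0) * phi q.+1 p.
Proof. by move=> hi hj hm hp; apply: phi_mul_trunc; lia. Qed.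

Lemma phi_rec7 k p : (1 <= k <= 5)%N -> (1 <= p <= 7)%N ->
  phi k.+2 p = prodc c (phi k) (phi k.+1) p.
Proof. by move=> hk hp; apply: phi_rec; lia. Qed.

Lemma phi_below k s : (3 <= k <= 7)%N -> (s < k)%N -> phi k s = 0.
Proof. by move=> hk hs; apply: phi_lower => //; lia. Qed.

Lemma prodc_phi_top k f : (3 <= k <= 6)%N ->
  prodc c f (phi k) k.+1 = \sum_(s < k) f s * phi k k * c s k k.+1.
Proof.
move=> hk; apply: prodc_top; [lia | lia | move=> s; apply: phi_below; lia].
Qed.

Local Ltac simpr := rewrite ?(mul0r, mulr0, add0r, addr0, mulr1, mul1r).

Lemma diag4 : phi 4 4 = phi 2 2 * phi 3 3.
Proof.
rewrite (@phi_rec7 2 4) // prodc_phi_top //.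
by rewrite !big_ord_recr big_ord0 /= !phi0 c134 (@c_consec7 2 4) //=; ring.
Qed.

Lemma diag5 : phi 5 5 = phi 3 3 * phi 4 4. Proof. by apply: diag_rec; lia. Qed.
Lemma diag6 : phi 6 6 = phi 4 4 * phi 5 5. Proof. by apply: diag_rec; lia. Qed.
Lemma diag7 : phi 7 7 = phi 5 5 * phi 6 6. Proof. by apply: diag_rec; lia. Qed.

(* phi(e_n) = phi_n(n) e_n by triangularity, and phi is injective. *)
Lemma diag_last_neq0 : phi n n != 0.
Proof.
apply/negP => /eqP h.
have h0 : basis_vec K n n *m A = 0.
  apply: vcoord_inj => p hp; rewrite vcoord_zero; change (phi n p = 0).
  by case: (ltngtP p n) => hpn; [rewrite phi_lower //; lia | lia | rewrite hpn].
have := mulmxK A_unit (basis_vec K n n); rewrite h0 mul0mx => e.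
have := @vcoord_basis K n n n ltac:(lia); rewrite -e vcoord_zero /kdelta eqxx.
by move=> /esym/eqP; rewrite oner_eq0.
Qed.

(* Going down the diagonal recurrence from phi_n(n) != 0. *)
Lemma diag34_neq0 : phi 3 3 != 0 /\ phi 4 4 != 0.
Proof.
suff chain k : (4 <= k <= n)%N -> phi k k != 0 -> phi 3 3 != 0 /\ phi 4 4 != 0.
  by apply: (chain n); [lia | exact: diag_last_neq0].
elim: k => // k IH hk hnz; case: (ltngtP k 3) => hk3; first lia.
  move: hnz; rewrite (_ : k.+1 = k.-1.+2); last lia.
  rewrite diag_rec; [|lia..]; rewrite mulf_eq0 negb_or => /andP [_ hk'].
  by apply: IH; [lia | rewrite (_ : k = k.-1.+1) //; lia].
by move: hnz; rewrite hk3 diag4 mulf_eq0 negb_or => /andP [-> ->].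
Qed.

Lemma diag3_neq0 : phi 3 3 != 0. Proof. by case: diag34_neq0. Qed.
Lemma diag4_neq0 : phi 4 4 != 0. Proof. by case: diag34_neq0. Qed.
Lemma diag5_neq0 : phi 5 5 != 0.
Proof. by rewrite diag5 mulf_neq0 // ?diag3_neq0 ?diag4_neq0. Qed.
Lemma diag6_neq0 : phi 6 6 != 0.
Proof. by rewrite diag6 mulf_neq0 // ?diag4_neq0 ?diag5_neq0. Qed.

(* Coordinate 4 of phi(e_1) phi(e_3) = phi(e_1 e_3) = 0, since c_13^4 = 0. *)
Lemma phi12 : phi 1 2 = 0.
Proof.
have := @phi_mul7 1 3 4 isT isT isT isT; rewrite prodc_phi_top //.
rewrite !big_ord_recr !big_ord0 /= !phi0 c134 (@c_consec7 2 4) //=; simpr.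
by move=> /eqP; rewrite mulf_eq0 (negbTE diag3_neq0) orbF => /eqP.
Qed.

(* Coordinate 5 of phi(e_1 e_4), using c_14^5 = c_24^5 = 0. *)
Lemma phi13 : phi 1 3 = 0.
Proof.
have := @phi_mul7 1 4 5 isT isT isT isT; rewrite prodc_phi_top //.
rewrite !big_ord_recr !big_ord0 /= !phi0 c145 c245 (@c_consec7 3 5) //= phi12; simpr.
by move=> /eqP; rewrite mulf_eq0 (negbTE diag4_neq0) orbF => /eqP.
Qed.

(* Coordinate 6 of phi(e_1 e_5), using c_15^6 = 0. *)
Lemma phi14 : phi 1 4 = 0.
Proof.
have := @phi_mul7 1 5 6 isT isT isT isT; rewrite prodc_phi_top //.
rewrite !big_ord_recr !big_ord0 /= !phi0 c156 (@c_consec7 4 6) //= phi12 phi13; simpr.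
by move=> /eqP; rewrite mulf_eq0 (negbTE diag5_neq0) orbF => /eqP.
Qed.

(* Coordinate 5 of phi(e_2 e_4), using c_14^5 = c_24^5 = 0. *)
Lemma phi23 : phi 2 3 = 0.
Proof.
have := @phi_mul7 2 4 5 isT isT isT isT; rewrite prodc_phi_top //.
rewrite !big_ord_recr !big_ord0 /= !phi0 c145 c245 (@c_consec7 3 5) //=; simpr.
by move=> /eqP; rewrite mulf_eq0 (negbTE diag4_neq0) orbF => /eqP.
Qed.

(* Coordinate 6 of phi(e_2 e_5), using c_15^6 = c_25^6 = 0. *)
Lemma phi24 : phi 2 4 = 0.
Proof.
have := @phi_mul7 2 5 6 isT isT isT isT; rewrite prodc_phi_top //.
rewrite !big_ord_recr !big_ord0 /= !phi0 c156 c256 (@c_consec7 4 6) //= phi23; simpr.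
by move=> /eqP; rewrite mulf_eq0 (negbTE diag5_neq0) orbF => /eqP.
Qed.

Lemma phi34 : phi 3 4 = 0.
Proof.
rewrite (@phi_rec7 1 4) // /prodc !big_ord_recr !big_ord0 /= !phi0 phi12 phi13 phi23.
by rewrite (@c_diag7 1 4) // (@c_consec7 1 4) //=; simpr.
Qed.

(* Coordinate 6 of phi(e_3 e_5), where c_35^6 = 1. *)
Lemma phi22 : phi 2 2 = 1.
Proof.
have := @phi_mul7 3 5 6 isT isT isT isT; rewrite prodc_phi_top //.
rewrite !big_ord_recr !big_ord0 /= !phi0 (@phi_below 3 1) // (@phi_below 3 2) //.
rewrite phi34 c356 diag6 diag4; simpr => e.
apply/esym; apply: (mulIf diag5_neq0); apply: (mulIf diag3_neq0).
by transitivity (phi 3 3 * phi 5 5); [ring | rewrite e; ring].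
Qed.

(* Coordinate 6 of phi(e_1 e_4), where c_45^6 = -1. *)
Lemma phi15 : phi 1 5 = 0.
Proof.
have := @phi_mul7 1 4 6 isT isT isT isT.
rewrite /prodc !big_ord_recr !big_ord0 /= !phi0 phi12 phi13 phi14.
rewrite (@phi_below 4 1) // (@phi_below 4 2) // (@phi_below 4 3) // c145 c146 c156.
rewrite (@c_anti7 5 4 6) // (@c_consec7 4 6) //= (@c_diag7 5 6) //; simpr.
by move=> /eqP; rewrite mulrN1 oppr_eq0 mulf_eq0 (negbTE diag4_neq0) orbF => /eqP.
Qed.

Lemma phi35 : phi 3 5 = 0.
Proof.
rewrite (@phi_rec7 1 5) // /prodc !big_ord_recr !big_ord0 /= !phi0.
rewrite phi12 phi13 phi14 phi23 phi24 (@c_diag7 1 5) // (@c_consec7 1 5) //=.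
by simpr.
Qed.

Lemma phi45 : phi 4 5 = phi 2 1 * phi 3 3 * c 1 3 5.
Proof.
rewrite (@phi_rec7 2 5) // /prodc !big_ord_recr !big_ord0 /= !phi0.
rewrite (@phi_below 3 1) // (@phi_below 3 2) // phi34 phi23 phi24 (@c_consec7 2 5) //=.
by simpr.
Qed.

Lemma phi56 : phi 5 6 = phi 3 3 * phi 4 5.
Proof.
rewrite (@phi_rec7 3 6) // /prodc !big_ord_recr !big_ord0 /= !phi0.
rewrite (@phi_below 3 1) // (@phi_below 3 2) // phi34 phi35.
rewrite (@phi_below 4 1) // (@phi_below 4 2) // (@phi_below 4 3) // (@c_consec7 3 6) //=.
by rewrite c356; simpr.
Qed.

(* Coordinate 6 of phi(e_1 e_3), using c_13^6 = 0 and c_13^5 != 0. *)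
Lemma phi21 : phi 2 1 = 0.
Proof.
have := @phi_mul7 1 3 6 isT isT isT isT.
rewrite /prodc !big_ord_recr !big_ord0 /= !phi0 phi12 phi13 phi14 phi15.
rewrite (@phi_below 3 1) // (@phi_below 3 2) // phi34 phi35 c134 c136 c146 c156; simpr.
move=> /esym/eqP; rewrite phi56 phi45 !mulf_eq0 (negbTE diag3_neq0) (negbTE c135_neq0).
by rewrite !orbF => /eqP.
Qed.

(* Coordinate 7 of phi(e_4 e_6), using c_46^7 != 0. *)
Lemma phi33 : phi 3 3 = 1.
Proof.
have := @phi_mul7 4 6 7 isT isT isT isT; rewrite prodc_phi_top //.
rewrite !big_ord_recr !big_ord0 /= !phi0 (@phi_below 4 1) // (@phi_below 4 2) //.
rewrite (@phi_below 4 3) // phi45 phi21 diag7 diag5; simpr => e.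
apply/esym; apply: (mulIf diag6_neq0); apply: (mulIf diag4_neq0); apply: (mulIf c467_neq0).
by transitivity (phi 4 4 * phi 6 6 * c 4 6 7); [ring | rewrite e; ring].
Qed.

Lemma phi11 : phi 1 1 = 1.
Proof.
have n_ge3 : (3 <= n)%N by lia.
by have := diag3 n_ge3; rewrite phi12 phi33 phi22; simpr; rewrite subr0.
Qed.

Definition dev (k : nat) : nat -> K := fun s => phi k s - kdelta k s.

Lemma phi_dev k p : phi k p = kdelta k p + dev k p.
Proof. by rewrite /dev addrC subrK. Qed.

Lemma dev_out k p : (1 <= k <= n)%N -> p = 0%N \/ (n < p)%N -> dev k p = 0.
Proof.
move=> hk [->|hp]; rewrite /dev /kdelta; first by rewrite phi0; case: eqP; [lia | rewrite subr0].
by rewrite phi_gt //; case: eqP; [lia | rewrite subr0].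
Qed.

Lemma dev_rec j p : (1 <= j)%N -> (j.+2 <= n)%N -> (1 <= p <= n)%N ->
  dev j.+2 p = prodc c (kdelta j) (dev j.+1) p + prodc c (dev j) (kdelta j.+1) p
             + prodc c (dev j) (dev j.+1) p.
Proof.
move=> h1 h2 hp; rewrite /dev phi_rec //.
rewrite (@prodc_split _ c _ _ (kdelta j) (kdelta j.+1) (dev j) (dev j.+1)); try exact: phi_dev.
by rewrite prodc_consec //; rewrite /dev; ring.
Qed.

Lemma dev_vanish_rec j a b q : (1 <= j)%N -> (j.+2 <= n)%N ->
  vanish_below (dev j) a -> vanish_below (dev j.+1) b ->
  (q <= (maxn j b).+1)%N -> (q <= (maxn a j.+1).+1)%N -> (q <= (maxn a b).+1)%N ->
  vanish_below (dev j.+2) q.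
Proof.
move=> h1 h2 ha hb q1 q2 q3 p hp.
case: (posnP p) => [->|p0]; first by apply: dev_out; [lia | left].
case: (ltnP n p) => pn; first by apply: dev_out; [lia | right].
rewrite dev_rec; [|lia..].
rewrite (@prodc_vanish _ c _ _ j b); [|exact: kdelta_vanish|by []|lia].
rewrite (@prodc_vanish _ c _ _ a j.+1); [|by []|exact: kdelta_vanish|lia].
by rewrite (@prodc_vanish _ c _ _ a b) ?addr0 //; lia.
Qed.

(* The order below which dev k is shown to vanish, once dev 1 and dev 2
   vanish below m. *)
Definition dev_level (m k : nat) : nat :=
  if (k < 3)%N then m else if (k < 5)%N then m.+1 else m.+2.

Lemma dev_level_step m k : (1 <= k)%N ->
  [/\ (dev_level m k.+2 <= (dev_level m k).+1)%N,
      (dev_level m k.+2 <= (dev_level m k.+1).+1)%N,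
      (m <= dev_level m k)%N & (m <= dev_level m k.+1)%N].
Proof. by rewrite /dev_level; case: k => [|[|[|[|[|k]]]]] //= _; split; lia. Qed.

(* Propagation along e_{k+2} = e_k e_{k+1}: dev k vanishes below m+1 for
   k >= 3 and below m+2 for k >= 5. *)
Lemma dev_vanish_from m : vanish_below (dev 1) m -> vanish_below (dev 2) m ->
  forall k, (3 <= k <= n)%N ->
  vanish_below (dev k) m.+1 /\ ((5 <= k)%N -> vanish_below (dev k) m.+2).
Proof.
move=> d1 d2.
have pair k : (1 <= k)%N -> (k.+1 <= n)%N ->
    vanish_below (dev k) (dev_level m k) /\ vanish_below (dev k.+1) (dev_level m k.+1).
  elim: k => // k IH hk hkn; case: (posnP k) => [-> //|k0].
  have [IH1 IH2] := IH k0 ltac:(lia); split => //.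
  have [s1 s2 s3 s4] := dev_level_step m k0.
  by apply: (@dev_vanish_rec k (dev_level m k) (dev_level m k.+1)) => //; lia.
move=> k hk; have [_ h] := pair k.-1 ltac:(lia) ltac:(lia).
rewrite (_ : k.-1.+1 = k) in h; last lia.
have lvl : (m.+1 <= dev_level m k)%N /\ ((5 <= k)%N -> (m.+2 <= dev_level m k)%N).
  rewrite /dev_level; case: (ltnP k 3) => h3; first lia.
  by case: (ltnP k 5) => h5; split; lia.
by split; [|move=> h5]; apply: vanish_below_le h _; case: lvl => // _; apply.
Qed.

(* e_{r+1} e_r = - e_{r+2}. *)
Lemma prodc_kdelta_prev (g : nat -> K) r : vanish_below g r.+1 -> (4 <= r)%N ->
  (r.+2 <= n)%N -> prodc c g (kdelta r) r.+2 = - g r.+1.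
Proof.
move=> hg h4 hn.
have inner s : \sum_(t < r.+2) g s * kdelta r t * c s t r.+2 = g s * c s r r.+2.
  transitivity (\sum_(t < r.+2) (if (t : nat) == r then g s * c s r r.+2 else 0)).
    apply: eq_bigr => t _; rewrite /kdelta; case: eqP => [->|]; first by rewrite mulr1.
    by rewrite mulr0 mul0r.
  by rewrite (sum_if_eq _ _ (fun _ => g s * c s r r.+2)) leqnSn.
rewrite /prodc; under eq_bigr do rewrite inner.
rewrite big_ord_recr /= big1 ?add0r; last by move=> s _; rewrite hg ?mul0r.
by rewrite c_anti ?c_consec ?eqxx ?mulrN1 //; lia.
Qed.

(* One step of the induction: coordinate r+2 of phi(e_i) phi(e_r) = phi(e_i e_r)
   shows dev i (r+1) = 0 for i = 1, 2. *)
Lemma dev12_step i r : (1 <= i <= 2)%N -> (4 <= r)%N -> (r.+2 <= n)%N ->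
  vanish_below (dev 1) r.+1 -> vanish_below (dev 2) r.+1 -> dev i r.+1 = 0.
Proof.
move=> hi h4 hn d1 d2.
have di : vanish_below (dev i) r.+1 by case/andP: hi; case: i => [|[|[|i]]].
have C := dev_vanish_from d1 d2.
have [Cr _] := C r ltac:(lia).
have [_ Cr1] := C r.+1 ltac:(lia).
have [_ Cr2] := C r.+2 ltac:(lia).
(* Left side: with phi(e_i) = e_i + dev i and phi(e_r) = e_r + dev r, the
   coordinate r+2 of the product is c_{ir}^{r+2} - dev_i(r+1). *)
have e := @phi_mul_trunc i r r.+2 ltac:(lia) ltac:(lia) ltac:(lia) ltac:(lia).
rewrite (@prodc_split _ c _ _ (kdelta i) (kdelta r) (dev i) (dev r)) in e;
  try exact: phi_dev.
rewrite prodc_kdelta (_ : (i < r.+2)%N && (r < r.+2)%N = true) in e; last by apply/andP; lia.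
rewrite (@prodc_vanish _ c (kdelta i) (dev r) i r.+2) in e;
  [|exact: kdelta_vanish|by []|lia].
rewrite (@prodc_vanish _ c (dev i) (dev r) r.+1 r.+2) // in e; last lia.
rewrite prodc_kdelta_prev // in e.
(* Right side: c_{ir}^{r+1} phi_{r+1}(r+2) + c_{ir}^{r+2} phi_{r+2}(r+2), where
   phi_{r+1}(r+2) = 0 and phi_{r+2}(r+2) = 1 by dev_vanish_from. *)
rewrite !big_ord_recr /= big1 ?add0r in e; last first.
  by move=> q _; case: ifP => h; [have := ltn_ord q; lia | rewrite mul0r].
rewrite (_ : (i < r.+1)%N && (r < r.+1)%N = true) in e; last by apply/andP; lia.
rewrite (_ : (i < r.+2)%N && (r < r.+2)%N = true) in e; last by apply/andP; lia.
rewrite !phi_dev (Cr1 ltac:(lia) r.+2) // (Cr2 ltac:(lia) r.+2) // /kdelta eqxx in e.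
rewrite (_ : (r.+2 == r.+1) = false) in e; last lia.
move: e; rewrite !addr0 ?add0r mulr0 mulr1 => e.
have -> : dev i r.+1 = c i r r.+2 - (c i r r.+2 - dev i r.+1) by ring.
by rewrite e add0r subrr.
Qed.

Lemma dev1_base : vanish_below (dev 1) 5.
Proof.
move=> s hs; case: s hs => [|[|[|[|[|s]]]]] // _;
  by rewrite /dev /kdelta /= ?phi0 ?phi11 ?phi12 ?phi13 ?phi14 ?subrr ?subr0.
Qed.

Lemma dev2_base : vanish_below (dev 2) 5.
Proof.
move=> s hs; case: s hs => [|[|[|[|[|s]]]]] // _;
  by rewrite /dev /kdelta /= ?phi0 ?phi21 ?phi22 ?phi23 ?phi24 ?subrr ?subr0.
Qed.

Lemma dev12_vanish m : (5 <= m <= n)%N ->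
  vanish_below (dev 1) m /\ vanish_below (dev 2) m.
Proof.
elim: m => // m IH /andP [h1 h2].
case: (ltngtP m 4) => hm; [lia | | by rewrite hm; split; [exact: dev1_base | exact: dev2_base]].
have [d1 d2] := IH ltac:(lia).
have e1 := @dev12_step 1 m.-1 isT ltac:(lia) ltac:(lia).
have e2 := @dev12_step 2 m.-1 isT ltac:(lia) ltac:(lia).
rewrite (_ : m.-1.+1 = m) in e1 e2; last lia.
have extend f : vanish_below f m -> f m = 0 -> vanish_below f m.+1.
  by move=> hf hfm s hs; case: (ltngtP s m) => hsm; [exact: hf | lia | rewrite hsm].
by split; apply: extend; [exact: d1 | exact: e1 | exact: d2 | exact: e2].
Qed.

Lemma aut_special : A = special_aut n (phi 1 n) (phi 2 n).
Proof.
have [d1 d2] := @dev12_vanish n ltac:(lia).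
have C := dev_vanish_from d1 d2.
apply/matrixP => i j.
(* Row i of A is phi(e_{i+1}) = e_{i+1} + dev (i+1), and dev (i+1) is zero
   except for its last coordinate when i+1 is 1 or 2. *)
have -> : A i j = phi i.+1 j.+1 by rewrite /phi basis_mulmx vcoord_ord mxE.
rewrite mxE phi_dev; have hj := ltn_ord j.
case: (ltnP 1 i) => hi.
  have [Ci _] := C i.+1 ltac:(have := ltn_ord i; lia).
  rewrite Ci; last lia.
  rewrite /kdelta eqSS eq_sym addr0 (_ : (nat_of_ord i == 0%N) = false); last lia.
  by rewrite (_ : (nat_of_ord i == 1%N) = false) ?if_same ?addr0 //; lia.
have [-> | ->] : nat_of_ord i = 0%N \/ nat_of_ord i = 1%N by lia.
- case: (ltngtP j.+1 n) => hjn; [ | lia | ].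
    by rewrite d1 // addr0 /kdelta eqSS addr0 eq_sym; case: (_ == _).
  by rewrite -phi_dev hjn (_ : (0 == nat_of_ord j) = false) ?add0r //; lia.
- case: (ltngtP j.+1 n) => hjn; [ | lia | ].
    by rewrite d2 // addr0 /kdelta eqSS addr0 eq_sym; case: (_ == _).
  by rewrite -phi_dev hjn (_ : (1 == nat_of_ord j) = false) ?add0r //; lia.
Qed.

End HatT.

End Automorphism.

(* Products have no e_1, e_2 component and never see the e_n component of a
   factor, so special_aut n a b is an automorphism of every algebra of T'_n. *)
Lemma special_aut_is_aut (a b : K) : (3 <= n)%N ->
  is_automorphism c (special_aut n a b).
Proof.
move=> n_ge3; split; first exact: (@special_aut_unit K n n_ge3 a b).
move=> x y; apply: vcoord_inj => p hp.
have low k : (k <= 2)%N -> vcoord (alg_mul c x y) k = 0.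
  move=> hk; case: k hk => [|k] hk; first exact: vcoord0.
  by rewrite vcoord_mul ?prodc_low ?vcoord0 //; lia.
rewrite [RHS](vcoord_special n_ge3) // (low 1%N) // (low 2%N) //.
rewrite !mulr0 addr0 if_same addr0 !vcoord_mul //.
have fix_below (z : 'rV[K]_n) s : (s < p)%N ->
    vcoord (z *m special_aut n a b) s = vcoord z s.
  move=> hs; case: (posnP s) => [->|s0]; first by rewrite !vcoord0.
  by rewrite (vcoord_special n_ge3); [rewrite ifF ?addr0 //; apply/eqP | ]; lia.
by apply: (prodc_ext c) => s hs; apply: fix_below.
Qed.

End Tprime.

Theorem mainTheorem18 (R : realType) (n : nat) (c : nat -> nat -> nat -> R[i]) :
  (7 <= n)%N -> in_That n c ->
  forall A : 'M[R[i]]_n,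
    is_automorphism c A <-> exists a b : R[i], A = special_aut n a b.
Proof.
move=> n_ge7 [[c_anti c_upper c_consec] [c134 [c145 [c156 [c245 [c256 [c146 [_ c136]]]]]]]
  c356 c_neq0] A.
have [c135_neq0 c467_neq0] : c 1 3 5 != 0 /\ c 4 6 7 != 0.
  by move: c_neq0; rewrite mulf_eq0 negb_or => /andP.
split=> [[A_unit A_mul] | [a [b ->]]].
- by exists (phi A 1 n), (phi A 2 n); apply: aut_special; eassumption.
- have n_ge3 : (3 <= n)%N by lia.
  exact: (special_aut_is_aut c_anti c_upper a b n_ge3).
Qed.
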